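(* Let $h:(\mathbb{R}^n,0)\to(\mathbb{R}^n,0)$ be a bi-Lipschitz homeomorphism germ, and let $A\subset\mathbb{R}^n$ be a set-germ at $0$ with $0\in\overline{A}$. Then [$LD(h(A))=LD(h(LD(A)))$ and $h(LD(A))$ satisfies condition (SSP)] if and only if [$LD(h^{-1}(LD(h(A))))=LD(A)$ and $h^{-1}(LD(h(A)))$ satisfies condition (SSP)].
   Context: For a set-germ $A\subset\mathbb{R}^n$ at $0$ with $0\in\overline A$, $D(A)=\{a\in S^{n-1}:\exists\, x_i\in A\setminus\{0\},\ x_i\to0,\ x_i/\|x_i\|\to a\}$ and $LD(A)=\{ta:a\in D(A),t\ge0\}$. For sequences, $\|u_m\|\ll\|v_m\|,\|w_m\|$ means $\|u_m\|/\|v_m\|\to0$ and $\|u_m\|/\|w_m\|\to0$. $A$ satisfies condition (SSP) if for every sequence $a_m\in\mathbb{R}^n$ tending to $0$ with $\lim a_m/\|a_m\|\in D(A)$ there is a sequence $b_m\in A$ with $\|a_m-b_m\|\ll\|a_m\|,\|b_m\|$. A bi-Lipschitz homeomorphism germ is a homeomorphism germ $h$ with $h(0)=0$ and constants $0<K_1\le K_2$ with $K_1\|x-y\|\le\|h(x)-h(y)\|\le K_2\|x-y\|$ near $0$. *)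

From mathcomp Require Import all_boot all_order all_algebra.
From mathcomp Require Import boolp classical_sets reals.
Set Implicit Arguments. Unset Strict Implicit. Unset Printing Implicit Defensive.
Import Order.TTheory GRing.Theory Num.Theory.
Local Open Scope ring_scope.
Local Open Scope classical_set_scope.

Section Defs.
Variables (R : realType) (n : nat).
Notation V := 'rV[R]_n.

Definition enorm (x : V) : R := Num.sqrt (\sum_(i < n) (x ord0 i) ^+ 2).

Definition ball0 (r : R) : set V := [set x | enorm x < r].

Definition seq_cvg (u : nat -> V) (l : V) : Prop :=
  forall e : R, 0 < e -> exists N : nat, forall m, (N <= m)%N -> enorm (u m - l) < e.

Definition zero_in_closure (A : set V) : Prop :=
  forall e : R, 0 < e -> exists x, A x /\ enorm x < e.

Definition Dset (A : set V) : set V :=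
  [set a | enorm a = 1 /\
     exists x : nat -> V, (forall i, A (x i) /\ x i != 0) /\ seq_cvg x 0 /\
       seq_cvg (fun i => (enorm (x i))^-1 *: x i) a].

Definition LD (A : set V) : set V :=
  [set v | exists t a, 0 <= t /\ Dset A a /\ v = t *: a].

Definition negligible (u v : nat -> V) : Prop :=
  forall e : R, 0 < e -> exists N : nat, forall m, (N <= m)%N ->
    enorm (u m) <= e * enorm (v m).

Definition SSP (A : set V) : Prop :=
  forall a : nat -> V, seq_cvg a 0 ->
    (exists d, Dset A d /\ seq_cvg (fun m => (enorm (a m))^-1 *: a m) d) ->
    exists b : nat -> V, (forall m, A (b m)) /\
      negligible (fun m => a m - b m) a /\ negligible (fun m => a m - b m) b.

(* h is a bi-Lipschitz homeomorphism germ (R^n,0) -> (R^n,0), represented on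
   the ball of radius r: bi-Lipschitz there, and its image contains a
   neighbourhood of 0. *)
Definition bilip_homeo_germ (h : V -> V) (r : R) : Prop :=
  h 0 = 0 /\ 0 < r /\
  (exists K1 K2 : R, 0 < K1 /\ K1 <= K2 /\
     forall x y, ball0 r x -> ball0 r y ->
       K1 * enorm (x - y) <= enorm (h x - h y) /\
       enorm (h x - h y) <= K2 * enorm (x - y)) /\
  (exists s : R, 0 < s /\ ball0 s `<=` h @` ball0 r).

(* germ of the image h(B), resp. of the image h^{-1}(B) under the inverse germ *)
Definition gimage (h : V -> V) (r : R) (B : set V) : set V := h @` (B `&` ball0 r).
Definition gpreimage (h : V -> V) (r : R) (B : set V) : set V := (h @^-1` B) `&` ball0 r.

End Defs.

(* A set X is approximable by Y when every sequence of nonzero points of X tending to 0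
   is, eventually, at distance o(|x_m|) from a sequence of points of Y.  For every X, the
   conjunction LD(X) = LD(Y) /\ (SSP) for Y amounts to mutual approximability of Y and
   LD(X): X is always approximable by LD(X), (SSP) for Y is approximability of LD(Y) by Y,
   and mutually approximable sets have the same limit directions.  So the left-hand side
   says that h(LD(A)) and LD(h(A)) approximate each other, and the right-hand side says the
   same of h^-1(LD(h(A))) and LD(A).  Near 0, h and a local inverse are Lipschitz and
   send 0 to 0, so they map a null sequence and an approximating sequence with
   o(|x_m|) error to sequences with the same property: approximability is transported
   across h in both directions. *)

From mathcomp Require Import all_boot all_order all_algebra.
From mathcomp Require Import boolp classical_sets reals topology normedtype sequences.
From mathcomp Require Import ring lra.
Import Order.TTheory GRing.Theory Num.Theory numFieldNormedType.Exports.
Local Open Scope ring_scope.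
Local Open Scope classical_set_scope.
Set Implicit Arguments. Unset Strict Implicit.

Section EuclideanNorm.
Variables (R : realType) (n : nat).
Notation V := 'rV[R]_n.
Implicit Types x y : V.

Lemma enorm_sqr x : enorm x ^+ 2 = \sum_(i < n) x ord0 i ^+ 2.
Proof. by rewrite sqr_sqrtr // sumr_ge0 // => i _; exact: sqr_ge0. Qed.

Lemma enorm_ge0 x : 0 <= enorm x.
Proof. exact: sqrtr_ge0. Qed.

Lemma enorm0 : enorm (0 : V) = 0.
Proof. by rewrite /enorm big1 ?sqrtr0 // => i _; rewrite mxE expr0n. Qed.

Lemma enorm_eq0 x : enorm x = 0 -> x = 0.
Proof.
move=> /eqP; rewrite sqrtr_eq0 => sum_le0.
have sum_eq0 : \sum_(i < n) x ord0 i ^+ 2 = 0.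
  by apply/eqP; rewrite eq_le sum_le0 sumr_ge0 // => i _; exact: sqr_ge0.
apply/rowP => i; rewrite mxE; apply/eqP; rewrite -sqrf_eq0; apply/eqP.
exact: (psumr_eq0P (fun i _ => sqr_ge0 (x ord0 i)) sum_eq0).
Qed.

Lemma enorm_gt0 x : x != 0 -> 0 < enorm x.
Proof.
by move=> x_neq0; rewrite lt_neqAle enorm_ge0 andbT eq_sym; apply: contra_neq x_neq0 => /enorm_eq0.
Qed.

Lemma enormZ (a : R) x : enorm (a *: x) = `|a| * enorm x.
Proof.
rewrite /enorm -sqrtr_sqr -sqrtrM ?sqr_ge0 //; congr Num.sqrt.
by rewrite mulr_sumr; apply: eq_bigr => i _; rewrite mxE; ring.
Qed.

Lemma enormN x : enorm (- x) = enorm x.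
Proof. by rewrite -scaleN1r enormZ normrN normr1 mul1r. Qed.

Lemma enorm_distC x y : enorm (x - y) = enorm (y - x).
Proof. by rewrite -enormN opprB. Qed.

Lemma cauchy_schwarz x y : \sum_(i < n) x ord0 i * y ord0 i <= enorm x * enorm y.
Proof.
set C := \sum_(i < n) x ord0 i * y ord0 i.
have [C_le0|C_gt0] := leP C 0; first by rewrite (le_trans C_le0) // mulr_ge0 ?enorm_ge0.
set A := \sum_(i < n) x ord0 i ^+ 2; set B := \sum_(i < n) y ord0 i ^+ 2.
have A_ge0 : 0 <= A by apply: sumr_ge0 => i _; exact: sqr_ge0.
have B_ge0 : 0 <= B by apply: sumr_ge0 => i _; exact: sqr_ge0.
(* Lagrange's identity: the sum of squares of [B x - C y] is [B (A B - C^2)]. *)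
have lagrange : \sum_(i < n) (B * x ord0 i - C * y ord0 i) ^+ 2 = B * (A * B - C ^+ 2).
  rewrite (eq_bigr (fun i => B ^+ 2 * x ord0 i ^+ 2
      - (2 * B * C) * (x ord0 i * y ord0 i) + C ^+ 2 * y ord0 i ^+ 2)); last first.
    by move=> i _; ring.
  by rewrite big_split /= sumrB -!mulr_sumr -/A -/B -/C; ring.
have B_gt0 : 0 < B.
  rewrite lt_neqAle B_ge0 andbT eq_sym; apply: contraTneq C_gt0 => B0.
  have y0 : y = 0 by apply: enorm_eq0; rewrite /enorm -/B B0 sqrtr0.
  by rewrite /C big1 ?ltxx // => i _; rewrite y0 mxE mulr0.
have : 0 <= B * (A * B - C ^+ 2).
  by rewrite -lagrange; apply: sumr_ge0 => i _; exact: sqr_ge0.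
rewrite pmulr_rge0 // subr_ge0 => CAB.
rewrite /enorm -/A -/B -sqrtrM //.
by rewrite -(ger0_norm (ltW C_gt0)) -sqrtr_sqr ler_sqrt // mulr_ge0.
Qed.

Lemma enormD x y : enorm (x + y) <= enorm x + enorm y.
Proof.
rewrite -ler_sqr ?nnegrE ?addr_ge0 ?enorm_ge0 // sqrrD !enorm_sqr.
have -> : \sum_(i < n) (x + y) ord0 i ^+ 2 = \sum_(i < n) x ord0 i ^+ 2
    + 2 * \sum_(i < n) x ord0 i * y ord0 i + \sum_(i < n) y ord0 i ^+ 2.
  by rewrite mulr_sumr -!big_split /=; apply: eq_bigr => i _; rewrite mxE; ring.
have := cauchy_schwarz x y; lra.
Qed.

Lemma enorm_le_addB x y : enorm y <= enorm x + enorm (x - y).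
Proof. by have := enormD x (- (x - y)); rewrite enormN opprB addrC subrK. Qed.

Lemma enorm_dist x y : `|enorm x - enorm y| <= enorm (x - y).
Proof.
rewrite ler_norml; have := enorm_le_addB x y; have := enorm_le_addB y x.
rewrite enorm_distC; lra.
Qed.

Lemma enorm_coord_le x i : `|x ord0 i| <= enorm x.
Proof.
rewrite -ler_sqr ?nnegrE ?enorm_ge0 // real_normK ?num_real // enorm_sqr.
by rewrite (bigD1 i) //= lerDl sumr_ge0 // => j _; exact: sqr_ge0.
Qed.

Lemma enorm_le_sum_coord x : enorm x <= \sum_(i < n) `|x ord0 i|.
Proof.
rewrite -ler_sqr ?nnegrE ?enorm_ge0 ?sumr_ge0 // enorm_sqr expr2 mulr_suml.
apply: ler_sum => i _; rewrite mulr_sumr (bigD1 i) //= -normrM -expr2.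
by rewrite ger0_norm ?sqr_ge0 // lerDl sumr_ge0 // => j _; rewrite mulr_ge0.
Qed.

End EuclideanNorm.

Section EventuallyNat.

Definition eventually_nat (P : nat -> Prop) := exists N, forall m, (N <= m)%N -> P m.

Lemma eventually_natS (P Q : nat -> Prop) :
  (forall m, P m -> Q m) -> eventually_nat P -> eventually_nat Q.
Proof. by move=> PQ [N PN]; exists N => m /PN /PQ. Qed.

Lemma eventually_natI (P Q : nat -> Prop) :
  eventually_nat P -> eventually_nat Q -> eventually_nat (fun m => P m /\ Q m).
Proof.
move=> [N1 P1] [N2 Q2]; exists (maxn N1 N2) => m; rewrite geq_max => /andP[m1 m2].
by split; [apply: P1 | apply: Q2].
Qed.

Lemma eventually_nat_forall (I : finType) (P : I -> nat -> Prop) :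
  (forall i, eventually_nat (P i)) -> eventually_nat (fun m => forall i, P i m).
Proof.
move=> /choice[N PN]; exists (\max_i N i) => m Nm i; apply: PN.
exact: leq_trans (leq_bigmax i) Nm.
Qed.

Lemma homo_ltn_geq (f : nat -> nat) : {homo f : m k / (m < k)%N} -> forall m, (m <= f m)%N.
Proof. by move=> f_incr; elim=> // m IHm; exact: leq_ltn_trans IHm (f_incr _ _ (ltnSn m)). Qed.

Lemma eventually_nat_comp (f : nat -> nat) (P : nat -> Prop) :
  {homo f : m k / (m < k)%N} -> eventually_nat P -> eventually_nat (P \o f).
Proof.
move=> f_incr [N PN]; exists N => m Nm; apply: PN.
exact: leq_trans Nm (homo_ltn_geq f_incr m).
Qed.

(* If [P] fails infinitely often, the indices where it fails form a subsequence. *)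
Lemma eventually_nat_subseq (P : nat -> Prop) :
  (forall f : nat -> nat, {homo f : m k / (m < k)%N} -> exists m, P (f m)) ->
  eventually_nat P.
Proof.
move=> hP; apply: contrapT => not_evP.
have fails_after N : exists m, (N <= m)%N /\ ~ P m.
  apply: contrapT => hN; apply: not_evP; exists N => m Nm.
  by apply: contrapT => Pm; apply: hN; exists m.
have [M hM] := choice fails_after.
pose fix f k := if k is k'.+1 then M (f k').+1 else M 0%N.
have f_incr : {homo f : m k / (m < k)%N}.
  by apply: homo_ltn => [y x z|k]; [exact: ltn_trans | exact: (hM _).1].
have [[|k] Pfk] := hP f f_incr; first exact: (hM 0%N).2.
exact: (hM (f k).+1).2.
Qed.

Lemma eventually_nat_inv_lt (R : realType) (e : R) :
  0 < e -> eventually_nat (fun m => (m.+1%:R)^-1 < e).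
Proof.
move=> e_gt0; exists (Num.Def.archi_bound e^-1) => m Nm.
rewrite -[e]invrK ltf_pV2 ?posrE ?invr_gt0 ?ltr0Sn //.
apply: lt_le_trans (archi_boundP _) _; first by rewrite invr_ge0 ltW.
by rewrite ler_nat; exact: leq_trans Nm (leqnSn m).
Qed.

End EventuallyNat.

Section Directions.
Variables (R : realType) (n : nat).
Notation V := 'rV[R]_n.
Implicit Types (x y : V) (u : nat -> V).

Lemma seq_cvg_comp u l (f : nat -> nat) :
  {homo f : m k / (m < k)%N} -> seq_cvg u l -> seq_cvg (u \o f) l.
Proof. by move=> f_incr cvg_u e e_gt0; exact: eventually_nat_comp f_incr (cvg_u e e_gt0). Qed.

Lemma seq_cvg0P u :
  seq_cvg u 0 <-> forall e, 0 < e -> eventually_nat (fun m => enorm (u m) < e).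
Proof. by split=> cvg_u e /cvg_u[N uN]; exists N => m /uN; rewrite subr0. Qed.

Lemma seq_cvg_enorm1 u c :
  seq_cvg u c -> eventually_nat (fun m => enorm (u m) = 1) -> enorm c = 1.
Proof.
move=> cvg_u [N uN]; apply/eqP; rewrite -subr_eq0 -normr_le0; apply/ler_addgt0Pr => e e_gt0.
have [N' uN'] := cvg_u e e_gt0; have := uN' (maxn N N') (leq_maxr _ _).
rewrite add0r -(uN (maxn N N') (leq_maxl _ _)) enorm_distC => lt_e.
by apply: ltW; apply: le_lt_trans lt_e; exact: enorm_dist.
Qed.

Definition dir x : V := (enorm x)^-1 *: x.

Lemma dir0 : dir 0 = 0.
Proof. by rewrite /dir scaler0. Qed.

Lemma enorm_dir x : x != 0 -> enorm (dir x) = 1.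
Proof.
move=> /enorm_gt0 x_gt0.
by rewrite /dir enormZ ger0_norm ?invr_ge0 ?enorm_ge0 // mulVf // gt_eqF.
Qed.

Lemma enorm_dir_le1 x : enorm (dir x) <= 1.
Proof. by have [->|/enorm_dir->//] := eqVneq x 0; rewrite dir0 enorm0 ler01. Qed.

Lemma dirZ (t : R) x : 0 < t -> dir (t *: x) = dir x.
Proof.
move=> t_gt0.
by rewrite /dir enormZ gtr0_norm // invfM scalerA mulrAC mulVf ?mul1r // gt_eqF.
Qed.

Lemma enorm_scale_dir x : enorm x *: dir x = x.
Proof.
have [->|/enorm_gt0 x_gt0] := eqVneq x 0; first by rewrite dir0 scaler0.
by rewrite /dir scalerA mulfV ?scale1r // gt_eqF.
Qed.

Lemma enorm_dirB x y : x != 0 -> enorm (dir x - dir y) <= 2 * enorm (x - y) / enorm x.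
Proof.
move=> /enorm_gt0 x_gt0.
have [->|/enorm_gt0 y_gt0] := eqVneq y 0.
  rewrite dir0 !subr0 (enorm_dir (_ : x != 0)) -?mulrA ?mulfV ?mulr1 ?gt_eqF //; first lra.
  by apply: contraTneq x_gt0 => ->; rewrite enorm0 ltxx.
have -> : dir x - dir y = (enorm x)^-1 *: (x - y) + ((enorm x)^-1 - (enorm y)^-1) *: y.
  by rewrite /dir scalerBr scalerBl addrA subrK.
apply: le_trans (enormD _ _) _; rewrite !enormZ ger0_norm ?invr_ge0 ?enorm_ge0 //.
have -> : `|(enorm x)^-1 - (enorm y)^-1| * enorm y = `|enorm y - enorm x| / enorm x.
  have -> : (enorm x)^-1 - (enorm y)^-1 = (enorm y - enorm x) / (enorm x * enorm y).
    by field; rewrite !gt_eqF.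
  rewrite normrM normfV (ger0_norm (mulr_ge0 (enorm_ge0 x) (enorm_ge0 y))).
  by field; rewrite !gt_eqF.
have := enorm_dist y x; rewrite enorm_distC => dist_le.
have -> : 2 * enorm (x - y) / enorm x = enorm (x - y) / enorm x + enorm (x - y) / enorm x.
  by field; rewrite gt_eqF.
by rewrite mulrC lerD2l ler_pM2r ?invr_gt0.
Qed.

Lemma cvg_dir_neq0 u d :
  seq_cvg (fun m => dir (u m)) d -> enorm d = 1 -> eventually_nat (fun m => u m != 0).
Proof.
move=> cvg_dir d1; have [N uN] := cvg_dir 1 ltr01; exists N => m /uN.
by apply: contraTN => /eqP->; rewrite dir0 sub0r enormN d1 ltxx.
Qed.

Lemma negligible_cvg0 u v :
  seq_cvg u 0 -> negligible (fun m => u m - v m) u -> seq_cvg v 0.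
Proof.
move=> /seq_cvg0P cvg_u negl; apply/seq_cvg0P => e e_gt0.
apply: eventually_natS (eventually_natI (cvg_u (e / 2) ltac:(lra)) (negl 1 ltr01)).
move=> m [um uvm]; have := enorm_le_addB (u m) (v m); rewrite mul1r in uvm; lra.
Qed.

Lemma negligible_cvg_dir u v d :
  seq_cvg (fun m => dir (u m)) d -> enorm d = 1 -> negligible (fun m => u m - v m) u ->
  seq_cvg (fun m => dir (v m)) d.
Proof.
move=> cvg_dir d1 negl e e_gt0.
have := eventually_natI (eventually_natI (cvg_dir (e / 2) ltac:(lra)) (cvg_dir_neq0 cvg_dir d1))
  (negl (e / 4) ltac:(lra)).
apply: eventually_natS => m [[dir_um um_neq0] uvm].
have u_gt0 := enorm_gt0 um_neq0.
have : 2 * enorm (u m - v m) / enorm (u m) <= e / 2 by rewrite ler_pdivrMr //; nra.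
have := enormD (dir (v m) - dir (u m)) (dir (u m) - d); rewrite addrA subrK.
have := enorm_dirB (v m) um_neq0; rewrite enorm_distC; lra.
Qed.

Lemma negligibleC u v :
  negligible (fun m => u m - v m) u -> negligible (fun m => u m - v m) v.
Proof.
move=> negl e e_gt0.
apply: eventually_natS (eventually_natI (negl (1 / 2) ltac:(lra)) (negl (e / 2) ltac:(lra))).
move=> m [uv_half uv_e]; have := enorm_le_addB (v m) (u m); rewrite enorm_distC.
have := enorm_ge0 (u m - v m); have := enorm_ge0 (v m); nra.
Qed.

End Directions.

Section BolzanoWeierstrass.
Variables (R : realType) (n : nat).
Notation V := 'rV[R]_n.

Lemma bolzano_weierstrass_R (u : nat -> R) M : (forall m, `|u m| <= M) ->
  exists2 f : nat -> nat, {homo f : m k / (m < k)%N} & exists l : R,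
    forall e, 0 < e -> eventually_nat (fun m => `|u (f m) - l| < e).
Proof.
move=> u_le; have u_bnd : bounded_fun (u : R^nat).
  by exists M; split; [rewrite num_real | move=> x Mx y _; apply: le_trans (u_le y) (ltW Mx)].
have [f /increasing_seqP f_incr /cvgrPdist_lt cvg_uf] := bolzano_weierstrass u_bnd.
exists f; first by apply: homo_ltn f_incr => y x z; exact: ltn_trans.
exists (lim (u \o f @ \oo)) => e /cvg_uf[N _ uN]; exists N => m Nm.
by rewrite distrC; exact: uN.
Qed.

Lemma bounded_coords_cvg_subseq (u : nat -> V) : (forall m, enorm (u m) <= 1) ->
  forall k, exists2 f : nat -> nat, {homo f : m k / (m < k)%N} & exists L : 'I_n -> R,
    forall i : 'I_n, (i < k)%N -> forall e, 0 < e ->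
      eventually_nat (fun m => `|u (f m) ord0 i - L i| < e).
Proof.
move=> u_le1; elim=> [|k [f f_incr [L uL]]]; first by exists id => //; exists (fun=> 0).
have [n_le_k|k_lt_n] := leqP n k.
  by exists f => //; exists L => i ik; apply: uL; exact: leq_trans (ltn_ord i) n_le_k.
pose ik : 'I_n := Ordinal k_lt_n.
have [g g_incr [l ul]] := @bolzano_weierstrass_R (fun m => u (f m) ord0 ik) 1
  (fun m => le_trans (enorm_coord_le _ _) (u_le1 (f m))).
exists (f \o g); first by move=> m m' mm'; apply: f_incr; exact: g_incr.
exists (fun i => if i == ik then l else L i) => i.
case: eqP => [-> _|i_neq]; first exact: ul.
rewrite ltnS leq_eqVlt => /orP[/eqP ik_eq|i_lt].
  by case: i_neq; apply: val_inj.
by move=> e /(uL i i_lt)/(eventually_nat_comp g_incr).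
Qed.

Lemma bolzano_weierstrass_rV (u : nat -> V) : (forall m, enorm (u m) <= 1) ->
  exists2 f : nat -> nat, {homo f : m k / (m < k)%N} & exists c, seq_cvg (u \o f) c.
Proof.
move=> /bounded_coords_cvg_subseq/(_ n)[f f_incr [L uL]].
exists f => //; exists (\row_i L i) => e e_gt0.
have e'_gt0 : 0 < e / n.+1%:R by rewrite divr_gt0 // ltr0Sn.
apply: eventually_natS (eventually_nat_forall (fun i => uL i (ltn_ord i) _ e'_gt0)) => m um.
apply: le_lt_trans (enorm_le_sum_coord _) _.
apply: (@le_lt_trans _ _ (\sum_(i < n) e / n.+1%:R)).
  by apply: ler_sum => i _; rewrite !mxE; exact: ltW (um i).
rewrite sumr_const card_ord -[X in X < _]mulr_natr.
have -> : e / n.+1%:R * n%:R = e - e / n.+1%:R.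
  have n_ge0 : (0 : R) <= n%:R by exact: ler0n.
  by rewrite -addn1 natrD; field; rewrite gt_eqF //; lra.
by rewrite ltrBlDr ltrDl.
Qed.

Lemma cvg_subseq_dir (u : nat -> V) :
  exists2 f : nat -> nat, {homo f : m k / (m < k)%N} &
    exists c, seq_cvg (fun m => dir (u (f m))) c.
Proof. exact: bolzano_weierstrass_rV (fun m => enorm_dir_le1 (u m)). Qed.

End BolzanoWeierstrass.

Section LimitDirections.
Variables (R : realType) (n : nat).
Notation V := 'rV[R]_n.
Implicit Types (X Y : set V) (u : nat -> V).

Lemma Dset_enorm X d : Dset X d -> enorm d = 1.
Proof. by case. Qed.

Lemma Dset_seq X u d : seq_cvg u 0 -> seq_cvg (fun m => dir (u m)) d -> enorm d = 1 ->
  eventually_nat (fun m => X (u m)) -> Dset X d.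
Proof.
move=> cvg_u cvg_dir d1 evX.
have [N uN] := eventually_natI (cvg_dir_neq0 cvg_dir d1) evX.
have shift_incr : {homo addn^~ N : m k / (m < k)%N} by move=> m k; rewrite ltn_add2r.
split=> //; exists (fun m => u (m + N)%N); split; last split.
- by move=> m; have [] := uN (m + N)%N (leq_addl _ _).
- exact: seq_cvg_comp shift_incr cvg_u.
- exact: seq_cvg_comp shift_incr cvg_dir.
Qed.

Lemma dir_LD X v : LD X v -> v != 0 -> Dset X (dir v).
Proof.
move=> [t [a [t_ge0 [Da ->]]]] ta_neq0.
have t_gt0 : 0 < t by rewrite lt_neqAle t_ge0 andbT eq_sym; apply: contraNneq ta_neq0 => ->; rewrite scale0r.
by rewrite dirZ // /dir (Dset_enorm Da) invr1 scale1r.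
Qed.

Lemma Dset_closed X (a : nat -> V) d : (forall m, Dset X (a m)) -> seq_cvg a d -> Dset X d.
Proof.
move=> Da cvg_a.
have d1 : enorm d = 1 by apply: seq_cvg_enorm1 cvg_a _; exists 0%N => m _; exact: Dset_enorm (Da m).
have near_a m : exists w, [/\ X w, enorm w < (m.+1%:R)^-1
    & enorm (dir w - a m) < (m.+1%:R)^-1].
  have [_ [z [Xz [/seq_cvg0P cvg_z cvg_dir]]]] := Da m.
  have inv_gt0 : 0 < (m.+1%:R : R)^-1 by rewrite invr_gt0 ltr0Sn.
  have [N zN] := eventually_natI (cvg_z _ inv_gt0) (cvg_dir _ inv_gt0).
  by exists (z N); have [z_lt dir_lt] := zN N (leqnn N); split=> //; case: (Xz N).
have [w wa] := choice near_a.
apply: (@Dset_seq X w d) => //; last by exists 0%N => m _; case: (wa m).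
- apply/seq_cvg0P => e /eventually_nat_inv_lt inv_lt; apply: eventually_natS inv_lt => m.
  by case: (wa m) => _ w_lt _; exact: lt_trans.
- move=> e e_gt0.
  have e2_gt0 : 0 < e / 2 by lra.
  have := eventually_natI (cvg_a _ e2_gt0) (eventually_nat_inv_lt e2_gt0).
  apply: eventually_natS => m [a_lt inv_lt].
  have [_ _ dir_lt] := wa m.
  have := enormD (dir (w m) - a m) (a m - d); rewrite addrA subrK.
  have := lt_trans dir_lt inv_lt; lra.
Qed.

Lemma Dset_LD X : Dset (LD X) = Dset X.
Proof.
apply/seteqP; split=> d.
  move=> [_ [u [LDu [_ cvg_dir]]]]; apply: Dset_closed cvg_dir => m.
  by case: (LDu m); exact: dir_LD.
move=> Dd; have d1 := Dset_enorm Dd.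
have inv_gt0 m : 0 < (m.+1%:R : R)^-1 by rewrite invr_gt0 ltr0Sn.
have enorm_u m : enorm ((m.+1%:R)^-1 *: d) = (m.+1%:R)^-1.
  by rewrite enormZ d1 mulr1 gtr0_norm.
split=> //; exists (fun m => (m.+1%:R)^-1 *: d); split; last split.
- move=> m; split; first by exists (m.+1%:R)^-1, d; split=> //; exact: ltW.
  by apply/eqP => u0; move: (inv_gt0 m); rewrite -enorm_u u0 enorm0 ltxx.
- apply/seq_cvg0P => e /eventually_nat_inv_lt inv_lt.
  by apply: eventually_natS inv_lt => m; rewrite enorm_u.
- move=> e e_gt0; exists 0%N => m _.
  by rewrite -/(dir (_ *: d)) dirZ // /dir d1 invr1 scale1r subrr enorm0.
Qed.

Lemma eq_LD X Y : Dset X = Dset Y -> LD X = LD Y.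
Proof. by rewrite /LD => ->. Qed.

Lemma LD_idem X : LD (LD X) = LD X.
Proof. exact: eq_LD (Dset_LD X). Qed.

Lemma cvg_subseq_Dset X u :
  eventually_nat (fun m => X (u m) /\ u m != 0) -> seq_cvg u 0 ->
  exists2 f : nat -> nat, {homo f : m k / (m < k)%N} &
    exists2 c, Dset X c & seq_cvg (fun m => dir (u (f m))) c.
Proof.
move=> evX cvg_u; have [f f_incr [c cvg_dir]] := cvg_subseq_dir u.
have evXf := eventually_nat_comp f_incr evX.
have c1 : enorm c = 1.
  by apply: seq_cvg_enorm1 cvg_dir _; apply: eventually_natS evXf => m [_]; exact: enorm_dir.
exists f => //; exists c => //; apply: Dset_seq (seq_cvg_comp f_incr cvg_u) cvg_dir c1 _.
by apply: eventually_natS evXf => m [].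
Qed.

End LimitDirections.

Section Approximation.
Variables (R : realType) (n : nat).
Notation V := 'rV[R]_n.
Implicit Types (X Y : set V) (u : nat -> V).

Definition approximated u Y := exists2 v : nat -> V,
  eventually_nat (fun m => Y (v m)) & negligible (fun m => u m - v m) u.

Definition approximable X Y := forall u,
  eventually_nat (fun m => X (u m) /\ u m != 0) -> seq_cvg u 0 -> approximated u Y.

Lemma approximated_everywhere u Y : approximated u Y ->
  exists2 v : nat -> V, (forall m, Y (v m)) & negligible (fun m => u m - v m) u.
Proof.
move=> [v [N vN] negl]; exists (fun m => if (m < N)%N then v N else v m).
  by move=> m; case: ltnP => [_|]; apply: vN.
move=> e /negl[N' vN']; exists (maxn N N') => m; rewrite geq_max => /andP[Nm N'm].
by rewrite ltnNge Nm; exact: vN'.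
Qed.

Lemma approximated_of_rates u Y : (forall k, eventually_nat (fun m =>
    exists2 y, Y y & enorm (u m - y) <= (k.+1%:R)^-1 * enorm (u m))) ->
  approximated u Y.
Proof.
move=> close.
have [y0 Yy0] : exists y0, Y y0.
  by have [N uN] := close 0%N; have [y Yy _] := uN N (leqnn N); exists y.
pose within m k y := enorm (u m - y) <= (k.+1%:R)^-1 * enorm (u m).
(* For each [m], take a point of [Y] realising the best rate [k <= j] available at [m]. *)
have best m j : exists y, Y y /\ forall k, (k <= j)%N ->
    (exists2 y', Y y' & within m k y') -> within m k y.
  elim: j => [|j [y [Yy y_best]]].
    case: (pselect (exists2 y, Y y & within m 0%N y)) => [[y Yy y0_ok]|no_y].
      by exists y; split=> // k; rewrite leqn0 => /eqP->.
    by exists y0; split=> // k; rewrite leqn0 => /eqP-> /no_y.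
  case: (pselect (exists2 y, Y y & within m j.+1 y)) => [[y' Yy' y'_ok]|no_y].
    exists y'; split=> // k k_le _; apply: le_trans y'_ok _; apply: ler_wpM2r; first exact: enorm_ge0.
    by rewrite lef_pV2 ?posrE ?ltr0Sn // ler_nat ltnS.
  by exists y; split=> // k; rewrite leq_eqVlt => /orP[/eqP-> /no_y|/y_best].
have [v v_best] := choice (fun m => best m m).
exists v; first by exists 0%N => m _; case: (v_best m).
move=> e /eventually_nat_inv_lt[K inv_lt]; have [N uN] := close K.
exists (maxn N K) => m; rewrite geq_max => /andP[Nm Km].
apply: le_trans ((v_best m).2 K Km (uN m Nm)) _.
by apply: ler_wpM2r; [exact: enorm_ge0 | exact: ltW (inv_lt K (leqnn K))].
Qed.

Lemma approximated_of_subseq u Y :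
  (forall f : nat -> nat, {homo f : m k / (m < k)%N} ->
    exists2 g : nat -> nat, {homo g : m k / (m < k)%N} & approximated (fun m => u (f (g m))) Y) ->
  approximated u Y.
Proof.
move=> sub; apply: approximated_of_rates => k; apply: eventually_nat_subseq => f f_incr.
have [g _ [v evY negl]] := sub f f_incr.
have inv_gt0 : 0 < (k.+1%:R : R)^-1 by rewrite invr_gt0 ltr0Sn.
have [N vN] := eventually_natI evY (negl _ inv_gt0).
by exists (g N); have [Yv v_le] := vN N (leqnn N); exists (v N).
Qed.

Lemma approximable_LD X : approximable X (LD X).
Proof.
move=> u evX cvg_u; apply: approximated_of_subseq => f f_incr.
have [g g_incr [c Dc cvg_dir]] := @cvg_subseq_Dset _ _ X (u \o f)
  (eventually_nat_comp f_incr evX) (seq_cvg_comp f_incr cvg_u).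
exists g => //; exists (fun m => enorm (u (f (g m))) *: c).
  by exists 0%N => m _; exists (enorm (u (f (g m)))), c; split=> //; exact: enorm_ge0.
move=> e e_gt0; apply: eventually_natS (cvg_dir e e_gt0) => m dir_lt.
rewrite -{1}(enorm_scale_dir (u (f (g m)))) -scalerBr enormZ ger0_norm ?enorm_ge0 // mulrC.
by apply: ler_wpM2r; [exact: enorm_ge0 | exact: ltW].
Qed.

Lemma SSP_approximable X : SSP X -> approximable (LD X) X.
Proof.
move=> ssp u evLD cvg_u; apply: approximated_of_subseq => f f_incr.
have cvg_uf := seq_cvg_comp f_incr cvg_u.
have [g g_incr [c Dc cvg_dir]] := @cvg_subseq_Dset _ _ (LD X) (u \o f)
  (eventually_nat_comp f_incr evLD) cvg_uf.
rewrite Dset_LD in Dc.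
have [v [Xv [negl _]]] := ssp _ (seq_cvg_comp g_incr cvg_uf) (ex_intro _ c (conj Dc cvg_dir)).
by exists g => //; exists v => //; exists 0%N.
Qed.

Lemma approximable_SSP X : approximable (LD X) X -> SSP X.
Proof.
move=> appr a cvg_a [d [Dd cvg_dir]].
have d1 := Dset_enorm Dd.
pose v m := enorm (a m) *: d.
have enorm_v m : enorm (v m) = enorm (a m) by rewrite enormZ d1 mulr1 ger0_norm ?enorm_ge0.
have evLD : eventually_nat (fun m => LD X (v m) /\ v m != 0).
  apply: eventually_natS (cvg_dir_neq0 cvg_dir d1) => m am_neq0.
  split; first by exists (enorm (a m)), d; split=> //; exact: enorm_ge0.
  by apply/eqP => v0; move: (enorm_gt0 am_neq0); rewrite -enorm_v v0 enorm0 ltxx.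
have cvg_v : seq_cvg v 0.
  move/seq_cvg0P: cvg_a => cvg_a; apply/seq_cvg0P => e /cvg_a a_lt.
  by apply: eventually_natS a_lt => m; rewrite enorm_v.
have [w Xw negl_vw] := approximated_everywhere (appr v evLD cvg_v).
have negl_aw : negligible (fun m => a m - w m) a.
  move=> e e_gt0; have e2_gt0 : 0 < e / 2 by lra.
  apply: eventually_natS (eventually_natI (cvg_dir _ e2_gt0) (negl_vw _ e2_gt0)).
  move=> m [dir_lt vw_le]; rewrite enorm_v in vw_le.
  have : enorm (a m - v m) <= e / 2 * enorm (a m).
    rewrite /v -{1}(enorm_scale_dir (a m)) -scalerBr enormZ ger0_norm ?enorm_ge0 // mulrC.
    by apply: ler_wpM2r; [exact: enorm_ge0 | exact: ltW].
  have := enormD (a m - v m) (v m - w m); rewrite addrA subrK; lra.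
by exists w; split=> //; split=> //; exact: negligibleC.
Qed.

Lemma approximable_Dset X Y : approximable X Y -> Dset X `<=` Dset Y.
Proof.
move=> appr d [d1 [u [Xu [cvg_u cvg_dir]]]].
have [v evY negl] := appr u (ex_intro _ 0%N (fun m _ => Xu m)) cvg_u.
exact: Dset_seq (negligible_cvg0 cvg_u negl) (negligible_cvg_dir cvg_dir d1 negl) d1 evY.
Qed.

Lemma approximable_LD_eq X Y : approximable X Y -> approximable Y X -> LD X = LD Y.
Proof. by move=> XY YX; apply: eq_LD; apply/seteqP; split; exact: approximable_Dset. Qed.

Lemma LD_eq_SSP_iff X Y :
  LD X = LD Y /\ SSP Y <-> approximable Y (LD X) /\ approximable (LD X) Y.
Proof.
split=> [[-> /SSP_approximable LDY_Y]|[Y_LDX LDX_Y]]; first by split=> //; exact: approximable_LD.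
have LD_eq : LD X = LD Y by rewrite -[LD X]LD_idem; exact: approximable_LD_eq.
by split=> //; apply: approximable_SSP; rewrite -LD_eq.
Qed.

End Approximation.

Section LipschitzTransfer.
Variables (R : realType) (n : nat).
Notation V := 'rV[R]_n.
Implicit Types (X Y : set V).

Record local_lipschitz_inverses (phi psi : V -> V) (rho L : R) : Prop :=
  LocalLipschitzInverses {
    lli_radius_gt0 : 0 < rho;
    lli_const_ge0 : 0 <= L;
    lli_phi0 : phi 0 = 0;
    lli_phi_lip : forall x y, enorm x < rho -> enorm y < rho ->
      enorm (phi x - phi y) <= L * enorm (x - y);
    lli_psi_lip : forall x y, enorm x < rho -> enorm y < rho ->
      enorm (psi x - psi y) <= L * enorm (x - y);
    lli_phiK : forall x, enorm x < rho -> psi (phi x) = x;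
    lli_psiK : forall y, enorm y < rho -> phi (psi y) = y }.

Lemma local_lipschitz_inversesC phi psi rho L :
  local_lipschitz_inverses phi psi rho L -> local_lipschitz_inverses psi phi rho L.
Proof.
case=> rho_gt0 L_ge0 phi0 phi_lip psi_lip phiK psiK; split=> //.
by rewrite -[in psi 0]phi0 phiK // enorm0.
Qed.

Lemma approximable_transfer X Y X' Y' phi psi rho L :
  local_lipschitz_inverses phi psi rho L ->
  (forall x, X x -> enorm x < rho -> X' (phi x)) ->
  (forall y, Y' y -> enorm y < rho -> Y (psi y)) ->
  approximable X' Y' -> approximable X Y.
Proof.
case=> rho_gt0 L_ge0 phi0 phi_lip psi_lip phiK _ XX' Y'Y appr u evX cvg_u.
move/seq_cvg0P: (cvg_u) => u_small.
have phi_le x : enorm x < rho -> enorm (phi x) <= L * enorm x.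
  by move=> x_lt; have := phi_lip x 0 x_lt; rewrite enorm0 phi0 !subr0; apply.
have evX' : eventually_nat (fun m => X' (phi (u m)) /\ phi (u m) != 0).
  apply: eventually_natS (eventually_natI evX (u_small _ rho_gt0)) => m [[Xu u_neq0] u_lt].
  split; first exact: XX'.
  by apply: contra_neq u_neq0 => phiu0; rewrite -(phiK _ u_lt) phiu0 -{1}phi0 phiK ?enorm0.
have cvg_phiu : seq_cvg (fun m => phi (u m)) 0.
  apply/seq_cvg0P => e e_gt0; have eL_gt0 : 0 < e / (L + 1) by rewrite divr_gt0 //; lra.
  apply: eventually_natS (eventually_natI (u_small _ rho_gt0) (u_small _ eL_gt0)).
  move=> m [u_lt]; rewrite ltr_pdivlMr; last lra.
  have := phi_le _ u_lt; have := enorm_ge0 (u m); nra.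
move/seq_cvg0P: (cvg_phiu) => phiu_small.
have [v evY' negl] := appr _ evX' cvg_phiu.
have /seq_cvg0P v_small := negligible_cvg0 cvg_phiu negl.
exists (fun m => psi (v m)).
  by apply: eventually_natS (eventually_natI evY' (v_small _ rho_gt0)) => m [/Y'Y].
move=> e e_gt0; pose e' := e / (L * L + 1).
have LL_gt0 : 0 < L * L + 1 by nra.
have e'_gt0 : 0 < e' by rewrite divr_gt0.
have e_eq : e = e' * (L * L + 1) by rewrite /e' mulfVK // gt_eqF.
apply: eventually_natS (eventually_natI
  (eventually_natI (u_small _ rho_gt0) (phiu_small _ rho_gt0))
  (eventually_natI (v_small _ rho_gt0) (negl _ e'_gt0))) => m [[u_lt phiu_lt] [v_lt v_le]].
rewrite -{1}(phiK _ u_lt); apply: le_trans (psi_lip _ _ phiu_lt v_lt) _.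
apply: le_trans (ler_wpM2l L_ge0 v_le) _.
rewrite mulrA; apply: le_trans (ler_wpM2l (mulr_ge0 L_ge0 (ltW e'_gt0)) (phi_le _ u_lt)) _.
have eu_ge0 : 0 <= e' * enorm (u m) by rewrite mulr_ge0 ?enorm_ge0 // ltW.
have -> : L * e' * (L * enorm (u m)) = L * L * (e' * enorm (u m)) by ring.
have -> : e * enorm (u m) = (L * L + 1) * (e' * enorm (u m)) by rewrite e_eq; ring.
by apply: ler_wpM2r => //; rewrite lerDl.
Qed.

Lemma bilip_homeo_germ_inverse (h : V -> V) r : bilip_homeo_germ h r ->
  exists g rho L, [/\ local_lipschitz_inverses h g rho L, rho <= r,
    forall x, enorm x < r -> g (h x) = x & forall y, enorm y < rho -> enorm (g y) < r].
Proof.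
move=> [h0 [r_gt0 [[K1 [K2 [K1_gt0 [K12 bilip]]]] [s [s_gt0 ball_s]]]]].
have K2_gt0 : 0 < K2 by apply: lt_le_trans K12.
pose L := K2 + K1^-1.
have h_inj x y : enorm x < r -> enorm y < r -> h x = h y -> x = y.
  move=> x_lt y_lt hxy; have [+ _] := bilip x y x_lt y_lt.
  rewrite hxy subrr enorm0 pmulr_rle0 // => xy_le0.
  by apply/eqP; rewrite -subr_eq0; apply/eqP/enorm_eq0/eqP; rewrite eq_le xy_le0 enorm_ge0.
have g_spec y : exists z, (exists2 x, enorm x < r & h x = y) -> enorm z < r /\ h z = y.
  by case: (pselect (exists2 x, enorm x < r & h x = y)) => [[x x_lt hx]|no_x];
    [exists x | exists 0].
have [g gK] := choice g_spec.
have ghK x : enorm x < r -> g (h x) = x.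
  by move=> x_lt; have [gx_lt hgx] := gK (h x) (ex_intro2 _ _ x x_lt erefl); exact: h_inj.
have g_ball y : enorm y < s -> enorm (g y) < r /\ h (g y) = y.
  by move=> /ball_s[x x_lt hx]; apply: gK; exists x.
exists g, (Order.min r s), L; split=> //; last 2 first.
- by rewrite ge_min lexx.
- by move=> y; rewrite lt_min => /andP[_ /g_ball[]].
split=> //.
- by rewrite lt_min r_gt0.
- by rewrite /L addr_ge0 ?invr_ge0 // ltW.
- move=> x y; rewrite !lt_min => /andP[x_lt _] /andP[y_lt _].
  apply: le_trans (bilip x y x_lt y_lt).2 _; apply: ler_wpM2r; first exact: enorm_ge0.
  by rewrite /L lerDl invr_ge0 ltW.
- move=> x y; rewrite !lt_min => /andP[_ /g_ball[gx_lt hgx]] /andP[_ /g_ball[gy_lt hgy]].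
  have [+ _] := bilip _ _ gx_lt gy_lt; rewrite hgx hgy -ler_pdivlMl // => g_le.
  apply: le_trans g_le _; apply: ler_wpM2r; first exact: enorm_ge0.
  by rewrite /L lerDr ltW.
- by move=> x; rewrite lt_min => /andP[x_lt _]; exact: ghK.
- by move=> y; rewrite lt_min => /andP[_ /g_ball[]].
Qed.

End LipschitzTransfer.

Unset Implicit Arguments.

Theorem proposition2p14 (R : realType) (n : nat) (h : 'rV[R]_n -> 'rV[R]_n) (r : R)
  (A : set 'rV[R]_n) :
  bilip_homeo_germ h r -> zero_in_closure A ->
  ((LD (gimage h r A) = LD (gimage h r (LD A)) /\ SSP (gimage h r (LD A))) <->
   (LD (gpreimage h r (LD (gimage h r A))) = LD A /\
    SSP (gpreimage h r (LD (gimage h r A))))).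
Proof.
move=> /bilip_homeo_germ_inverse[g [rho [L [hg rho_le_r ghK g_lt]]]] _.
have gh := local_lipschitz_inversesC hg.
set B := LD A; set C := LD (gimage h r A).
have h_B x : B x -> enorm x < rho -> gimage h r B (h x).
  by move=> Bx x_lt; exists x => //; split=> //; exact: lt_le_trans x_lt rho_le_r.
have g_C y : C y -> enorm y < rho -> gpreimage h r C (g y).
  by move=> Cy y_lt; split; [rewrite /= (lli_psiK hg y_lt) | exact: g_lt].
have h_P x : gpreimage h r C x -> enorm x < rho -> C (h x) by case.
have g_hB y : gimage h r B y -> enorm y < rho -> B (g y).
  by case=> x [Bx x_lt] <- _; rewrite ghK.
have [to_approx_h of_approx_h] := LD_eq_SSP_iff (gimage h r A) (gimage h r B).
have [to_approx_g of_approx_g] := LD_eq_SSP_iff A (gpreimage h r C).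
split=> [/to_approx_h[hB_C C_hB]|[P_eq P_SSP]].
  have [A_P_eq P_SSP] := of_approx_g (conj (approximable_transfer hg h_P g_hB C_hB)
    (approximable_transfer hg h_B g_C hB_C)).
  by split.
have [P_B B_P] := to_approx_g (conj (esym P_eq) P_SSP).
apply: of_approx_h; split.
- exact: approximable_transfer gh g_hB h_P B_P.
- exact: approximable_transfer gh g_C h_B P_B.
Qed.
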